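(* Let $\alpha_2,\alpha_3,k$ be positive integers with $\alpha_2,\alpha_3$ coprime, and let $X_1=\{x+x^ky^{k-1}+z^{\alpha_2}+t^{\alpha_3}=0\}\subset\mathbb{A}^4=\mathrm{Spec}(\mathbb{C}[x,y,z,t])$ with the $\mathbb{G}_m$-action induced by $\lambda\cdot(x,y,z,t)=(\lambda^{\alpha_2\alpha_3}x,\lambda^{-\alpha_2\alpha_3}y,\lambda^{\alpha_3}z,\lambda^{\alpha_2}t)$. Let $d\ge2$ be an integer with $d\alpha_3$ and $\alpha_2$ coprime, and let $X_2=\{x+y^{d-1}(x^d+z^{\alpha_2})+t^{\alpha_3}=0\}\subset\mathbb{A}^4$ with the $\mathbb{G}_m$-action induced by $\lambda\cdot(x,y,z,t)=(\lambda^{\alpha_2\alpha_3}x,\lambda^{-\alpha_2\alpha_3}y,\lambda^{d\alpha_3}z,\lambda^{\alpha_2}t)$. Then $X_1$ and $X_2$ are $\mathbb{G}_m$-linearly rational.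
   Context: Each of these hyperbolic $\mathbb{G}_m$-varieties has the origin as its unique fixed point. A $\mathbb{G}_m$-variety with a unique fixed point $x_0$ is $\mathbb{G}_m$-linearly rational if there exist a $\mathbb{G}_m$-stable open neighborhood $U$ of $x_0$, a linear $\mathbb{G}_m$-representation $V\simeq\mathbb{A}^n$ and a $\mathbb{G}_m$-stable open subset $U'\subset V$ such that $U$ is $\mathbb{G}_m$-equivariantly isomorphic to $U'$. *)

(* classical (quasi-)affine varieties over an algebraically
   closed field, described by their closed points, with Zariski-open subsets
   and regular maps in the sense of Hartshorne I.3. *)
From HB Require Import structures.
From mathcomp Require Import all_boot all_order all_algebra.
From mathcomp Require Import complex Rstruct.
From mathcomp Require Import mpoly.
Set Implicit Arguments. Unset Strict Implicit. Unset Printing Implicit Defensive.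
Import Order.TTheory GRing.Theory Num.Theory.
Local Open Scope ring_scope.

Definition CC : closedFieldType := (Rdefinitions.R)[i].

Section Varieties.
Variable K : fieldType.

Definition pt (n : nat) := 'I_n -> K.

Definition Zset n (P : seq {mpoly K[n]}) : pt n -> Prop :=
  fun x => forall p, p \in P -> p.@[x] = 0.

Definition open_in n (X U : pt n -> Prop) : Prop :=
  exists Q : seq {mpoly K[n]},
    forall x, U x <-> (X x /\ exists2 q, q \in Q & q.@[x] != 0).

Definition regular_on n m (U : pt n -> Prop) (f : pt n -> pt m) : Prop :=
  forall p, U p -> exists (g : 'I_m -> {mpoly K[n]}) (h : {mpoly K[n]}),
    h.@[p] != 0 /\
    forall x, U x -> h.@[x] != 0 -> forall i, f x i = (g i).@[x] / h.@[x].

Definition var_iso n m (U : pt n -> Prop) (U' : pt m -> Prop)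
    (f : pt n -> pt m) (g : pt m -> pt n) : Prop :=
  [/\ forall x, U x -> U' (f x), forall y, U' y -> U (g y),
      regular_on U f & regular_on U' g] /\
  (forall x, U x -> g (f x) = x) /\ (forall y, U' y -> f (g y) = y).

Definition diag_act n (w : 'I_n -> int) (l : K) (x : pt n) : pt n :=
  fun i => l ^ (w i) * x i.

Definition lin_rep m (rho : K -> 'M[K]_m) : Prop :=
  [/\ (exists (P : 'I_m -> 'I_m -> {poly K}) (N : nat),
         forall l, l != 0 -> forall i j, rho l i j = (P i j).[l] / l ^+ N),
      rho 1 = 1%:M &
      forall l l', l != 0 -> l' != 0 -> rho (l * l') = rho l *m rho l'].

Definition rep_act m (rho : K -> 'M[K]_m) (l : K) (x : pt m) : pt m :=
  fun i => \sum_(j < m) rho l i j * x j.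

Definition Gm_stable n (act : K -> pt n -> pt n) (U : pt n -> Prop) : Prop :=
  forall l x, l != 0 -> U x -> U (act l x).

Definition Gm_linearly_rational n (P : seq {mpoly K[n]}) (w : 'I_n -> int)
    (x0 : pt n) : Prop :=
  exists U : pt n -> Prop,
    [/\ open_in (Zset P) U, U x0, Gm_stable (diag_act w) U &
    exists (m : nat) (rho : K -> 'M[K]_m) (U' : pt m -> Prop)
           (f : pt n -> pt m) (g : pt m -> pt n),
      [/\ lin_rep rho, open_in (fun _ => True) U',
          Gm_stable (rep_act rho) U', var_iso U U' f g &
          forall l x, l != 0 -> U x -> f (diag_act w l x) = rep_act rho l (f x)]].

End Varieties.

Definition i0 : 'I_4 := @Ordinal 4 0 isT.
Definition i1 : 'I_4 := @Ordinal 4 1 isT.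
Definition i2 : 'I_4 := @Ordinal 4 2 isT.
Definition i3 : 'I_4 := @Ordinal 4 3 isT.
Definition vx : {mpoly CC[4]} := 'X_i0.
Definition vy : {mpoly CC[4]} := 'X_i1.
Definition vz : {mpoly CC[4]} := 'X_i2.
Definition vt : {mpoly CC[4]} := 'X_i3.

Definition origin4 : pt CC 4 := fun _ => 0.

Definition weights4 (a b c e : int) : 'I_4 -> int :=
  fun i => match val i with 0 => a | 1 => b | 2 => c | _ => e end.

Definition X1_eq (a2 a3 k : nat) : {mpoly CC[4]} :=
  vx + vx ^+ k * vy ^+ k.-1 + vz ^+ a2 + vt ^+ a3.
Definition X1_weights (a2 a3 : nat) : 'I_4 -> int :=
  weights4 (a2 * a3)%N%:Z (- (a2 * a3)%N%:Z) a3%:Z a2%:Z.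

Definition X2_eq (a2 a3 d : nat) : {mpoly CC[4]} :=
  vx + vy ^+ d.-1 * (vx ^+ d + vz ^+ a2) + vt ^+ a3.
Definition X2_weights (a2 a3 d : nat) : 'I_4 -> int :=
  weights4 (a2 * a3)%N%:Z (- (a2 * a3)%N%:Z) (d * a3)%N%:Z a2%:Z.

(* Both hypersurfaces have the form x (1 + (xy)^k) + s(y,z,t) = 0 with s weighted
   homogeneous, so c = 1 + (xy)^k is an invariant function, nonzero at the origin.
   On {c <> 0} the equation determines x, and rescaling (y,z,t) by integer powers
   c^(e_i) gives a point v with v_0 s(v) = y s(y,z,t) / c = -xy. Hence c is recovered
   on A^3 as 1 + (-v_0 s(v))^k, and the rescaling is a G_m-equivariant isomorphism onto
   the principal open subset of A^3 where this is nonzero, with its diagonal action.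
   The exponents must satisfy s(c^e v) = c^(-1-e_0) s(v): for X_1 take e = (-1,0,0);
   for X_2 they come from a Bezout relation between d a3 and a2. *)

From HB Require Import structures.
From mathcomp Require Import all_boot all_order all_algebra.
From mathcomp Require Import complex Rstruct.
From mathcomp Require Import mpoly.
From mathcomp Require Import ring zify.
From Stdlib Require Import FunctionalExtensionality.
Set Implicit Arguments. Unset Strict Implicit. Unset Printing Implicit Defensive.
Import GRing.Theory Num.Theory.
Local Open Scope ring_scope.

Section GmVarieties.
Variable K : fieldType.

Lemma diag_actM n (w : 'I_n -> int) (a b : K) (x : pt K n) :
  diag_act w a (diag_act w b x) = diag_act w (a * b) x.
Proof. by apply: functional_extensionality => i; rewrite /diag_act expfzMl mulrA. Qed.

Lemma diag_actC n (w w' : 'I_n -> int) (a b : K) (x : pt K n) :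
  diag_act w a (diag_act w' b x) = diag_act w' b (diag_act w a x).
Proof. by apply: functional_extensionality => i; rewrite /diag_act mulrCA. Qed.

Lemma diag_act1 n (w : 'I_n -> int) (x : pt K n) : diag_act w 1 x = x.
Proof. by apply: functional_extensionality => i; rewrite /diag_act exp1rz mul1r. Qed.

Lemma le0_add_bigmax_abs n (w : 'I_n -> int) i : 0 <= w i + (\max_j absz (w j))%:Z.
Proof. have := @leq_bigmax _ (fun j => absz (w j)) i; lia. Qed.

Definition diag_rep m (w : 'I_m -> int) (l : K) : 'M[K]_m := diag_mx (\row_i l ^ w i).

Lemma rep_act_diag_rep m (w : 'I_m -> int) : rep_act (diag_rep w) = diag_act w.
Proof.
apply: functional_extensionality => l; apply: functional_extensionality => x.
apply: functional_extensionality => i.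
rewrite /rep_act /diag_act (bigD1 i) //= big1 ?addr0; first by rewrite !mxE eqxx mulr1n.
by move=> j ji; rewrite !mxE eq_sym (negbTE ji) mulr0n mul0r.
Qed.

Lemma lin_rep_diag_rep m (w : 'I_m -> int) : lin_rep (diag_rep w).
Proof.
pose N := (\max_j absz (w j))%N.
split.
- exists (fun i j => if i == j then 'X^(absz (w i + N%:Z)) else 0), N => l l0 i j.
  rewrite !mxE; case: eqP => [->|_]; last by rewrite mulr0n horner0 mul0r.
  rewrite mulr1n hornerXn exprnP gez0_abs ?le0_add_bigmax_abs // expfzDr //.
  by rewrite -exprnP mulfK // expf_neq0.
- by rewrite -diag_const_mx; congr diag_mx; apply/rowP => i; rewrite !mxE exp1rz.
- move=> l l' _ _; rewrite mulmx_diag; congr diag_mx; apply/rowP => i.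
  by rewrite !mxE expfzMl.
Qed.

Lemma mevalXn n (x : pt K n) (p : {mpoly K[n]}) k : (p ^+ k).@[x] = p.@[x] ^+ k.
Proof. exact: rmorphXn. Qed.

Lemma Zset1 n (p : {mpoly K[n]}) x : Zset [:: p] x <-> p.@[x] = 0.
Proof.
split=> [Zx|p0 q]; first exact: Zx (mem_head _ _).
by rewrite inE => /eqP ->.
Qed.

Definition principal_open n (X : pt K n -> Prop) (c : {mpoly K[n]}) (x : pt K n) :=
  X x /\ c.@[x] != 0.

Lemma open_in_principal n (X : pt K n -> Prop) c : open_in X (principal_open X c).
Proof.
exists [:: c] => x; split=> [[Xx cx]|[Xx [q]]]; first by split=> //; exists c; rewrite ?mem_head.
by rewrite inE => /eqP ->.
Qed.

Lemma regular_on_scaled n m (U : pt K n -> Prop) (c : {mpoly K[n]})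
    (p : 'I_m -> {mpoly K[n]}) (e : 'I_m -> int) (f : pt K n -> pt K m) :
  (forall x, U x -> c.@[x] != 0) ->
  (forall x, U x -> forall i, f x i = (p i).@[x] * c.@[x] ^ e i) ->
  regular_on U f.
Proof.
move=> c_neq0 fE x0 Ux0; pose E := (\max_j absz (e j))%N.
exists (fun i => p i * c ^+ absz (e i + E%:Z)), (c ^+ E).
split=> [|x Ux _ i]; first by rewrite mevalXn expf_neq0 ?c_neq0.
rewrite fE // mevalM !mevalXn exprnP gez0_abs ?le0_add_bigmax_abs //.
by rewrite expfzDr ?c_neq0 // -exprnP mulrA mulfK // expf_neq0 ?c_neq0.
Qed.

Lemma Gm_linearly_rational_of_principal_iso n m (P : seq {mpoly K[n]})
    (w : 'I_n -> int) (x0 : pt K n) (v : 'I_m -> int)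
    (c : {mpoly K[n]}) (c' : {mpoly K[m]}) (f : pt K n -> pt K m) (g : pt K m -> pt K n) :
  let U := principal_open (Zset P) c in
  let U' := principal_open (fun _ => True) c' in
  U x0 -> Gm_stable (diag_act w) U -> Gm_stable (diag_act v) U' -> var_iso U U' f g ->
  (forall l x, l != 0 -> U x -> f (diag_act w l x) = diag_act v l (f x)) ->
  Gm_linearly_rational P w x0.
Proof.
move=> U U' Ux0 stU stU' iso f_equiv; exists U; split=> //; first exact: open_in_principal.
exists m, (diag_rep v), U', f, g; rewrite rep_act_diag_rep; split=> //.
- exact: lin_rep_diag_rep.
- exact: open_in_principal.
Qed.

Definition quasi_homog n (w : 'I_n -> int) (d : int) (p : {mpoly K[n]}) : Prop :=
  forall c x, c != 0 -> p.@[diag_act w c x] = c ^ d * p.@[x].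

Lemma quasi_homogX n (w : 'I_n -> int) i : quasi_homog w (w i) 'X_i.
Proof. by move=> c x _; rewrite !mevalXU. Qed.

Lemma quasi_homogD n (w : 'I_n -> int) d p q :
  quasi_homog w d p -> quasi_homog w d q -> quasi_homog w d (p + q).
Proof. by move=> hp hq c x c0; rewrite !mevalD hp // hq // mulrDr. Qed.

Lemma quasi_homogM n (w : 'I_n -> int) d d' p q :
  quasi_homog w d p -> quasi_homog w d' q -> quasi_homog w (d + d') (p * q).
Proof.
by move=> hp hq c x c0; rewrite !mevalM hp // hq // expfzDr // mulrACA.
Qed.

Lemma quasi_homogXn n (w : 'I_n -> int) d p k :
  quasi_homog w d p -> quasi_homog w (d * k%:Z) (p ^+ k).
Proof.
by move=> hp c x c0; rewrite !mevalXn hp // exprMn -exprz_exp -exprnP.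
Qed.

End GmVarieties.

Section Coordinates.
Variable T : Type.

Definition ftail n (x : 'I_n.+1 -> T) : 'I_n -> T := fun j => x (lift ord0 j).

Definition fcons n (a : T) (v : 'I_n -> T) : 'I_n.+1 -> T :=
  fun i => if unlift ord0 i is Some j then v j else a.

Lemma fcons0 n a (v : 'I_n -> T) : fcons a v ord0 = a.
Proof. by rewrite /fcons unlift_none. Qed.

Lemma fconsS n a (v : 'I_n -> T) j : fcons a v (lift ord0 j) = v j.
Proof. by rewrite /fcons liftK. Qed.

Lemma ftail_fcons n a (v : 'I_n -> T) : ftail (fcons a v) = v.
Proof. by apply: functional_extensionality => j; rewrite /ftail fconsS. Qed.

Lemma fcons_ftail n (x : 'I_n.+1 -> T) : fcons (x ord0) (ftail x) = x.
Proof. by apply: functional_extensionality => i; rewrite /fcons; case: unliftP => [j|] ->. Qed.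

End Coordinates.

Section Hypersurface.
Variables (K : fieldType) (n k : nat) (w : 'I_n.+2 -> int) (e : 'I_n.+1 -> int).
Variables (s : {mpoly K[n.+1]}) (P : {mpoly K[n.+2]}).
(* [two_neq0] is only needed for k = 0, where 1 + (xy)^k is the constant 2. *)
Hypotheses (two_neq0 : 2%:R != 0 :> K) (w_y_opp : w (lift ord0 ord0) = - w ord0).
Hypotheses (s_weight : quasi_homog (ftail w) (w ord0) s)
  (s_scale : quasi_homog e (-1 - e ord0) s) (s0 : s.@[fun _ => 0] = 0).
Hypothesis P_eval : forall x,
  P.@[x] = x ord0 * (1 + (x ord0 * x (lift ord0 ord0)) ^+ k) + s.@[ftail x].

Definition hyp_unit : {mpoly K[n.+2]} := 1 + ('X_ord0 * 'X_(lift ord0 ord0)) ^+ k.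
Definition aff_unit : {mpoly K[n.+1]} := 1 + (- ('X_ord0 * s)) ^+ k.

Definition hyp_to_aff (x : pt K n.+2) : pt K n.+1 := diag_act e hyp_unit.@[x] (ftail x).
Definition aff_to_hyp (v : pt K n.+1) : pt K n.+2 :=
  fcons (- aff_unit.@[v] ^ e ord0 * s.@[v]) (diag_act e aff_unit.@[v]^-1 v).

Let U := principal_open (Zset [:: P]) hyp_unit.
Let U' := principal_open (fun _ => True) aff_unit.

Lemma hyp_unitE x : hyp_unit.@[x] = 1 + (x ord0 * x (lift ord0 ord0)) ^+ k.
Proof. by rewrite mevalD meval1 mevalXn mevalM !mevalXU. Qed.

Lemma aff_unitE v : aff_unit.@[v] = 1 + (- (v ord0 * s.@[v])) ^+ k.
Proof. by rewrite mevalD meval1 mevalXn mevalN mevalM mevalXU. Qed.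

Lemma P_eval_unit x : P.@[x] = x ord0 * hyp_unit.@[x] + s.@[ftail x].
Proof. by rewrite P_eval hyp_unitE. Qed.

Lemma hyp_unit_invariant l x : l != 0 -> hyp_unit.@[diag_act w l x] = hyp_unit.@[x].
Proof.
move=> l0; rewrite !hyp_unitE /diag_act w_y_opp -invr_expz.
by congr (1 + _ ^+ _); field; rewrite expfz_neq0.
Qed.

Lemma aff_unit_invariant l v : l != 0 -> aff_unit.@[diag_act (ftail w) l v] = aff_unit.@[v].
Proof.
move=> l0; rewrite !aff_unitE s_weight // {1}/diag_act /ftail w_y_opp -invr_expz.
by congr (1 + (- _) ^+ _); field; rewrite expfz_neq0.
Qed.

Lemma P_weight l x : l != 0 -> P.@[diag_act w l x] = l ^ w ord0 * P.@[x].
Proof.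
by move=> l0; rewrite !P_eval_unit hyp_unit_invariant // s_weight // mulrDr mulrA.
Qed.

Lemma U_stable : Gm_stable (diag_act w) U.
Proof.
move=> l x l0 [/Zset1 Px Cx]; split; last by rewrite hyp_unit_invariant.
by apply/Zset1; rewrite P_weight // Px mulr0.
Qed.

Lemma U'_stable : Gm_stable (diag_act (ftail w)) U'.
Proof. by move=> l v l0 [_ Cv]; split; rewrite ?aff_unit_invariant. Qed.

Lemma U_origin : U (fun _ => 0).
Proof.
split; first by apply/Zset1; rewrite P_eval_unit mul0r add0r; exact: s0.
by rewrite hyp_unitE mul0r expr0n; case: k => [|k'] /=; [exact: two_neq0 | rewrite addr0 oner_neq0].
Qed.

Lemma s_scale_inv c v : c != 0 -> s.@[diag_act e c^-1 v] = c ^ (1 + e ord0) * s.@[v].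
Proof. by move=> c0; rewrite s_scale ?invr_eq0 // exprz_inv; congr (_ ^ _ * _); lia. Qed.

Lemma expfz_scale_cancel (c : K) : c != 0 -> c ^ e ord0 * c ^ (-1 - e ord0) = c^-1.
Proof. by move=> c0; rewrite -expfzDr // -exprN1; congr (_ ^ _); lia. Qed.

Lemma s_on_U x : U x -> s.@[ftail x] = - (x ord0 * hyp_unit.@[x]).
Proof. by move=> [/Zset1 Px _]; apply/eqP; rewrite -addr_eq0 addrC -P_eval_unit Px. Qed.

Lemma aff_unit_hyp_to_aff x : U x -> aff_unit.@[hyp_to_aff x] = hyp_unit.@[x].
Proof.
move=> Ux; have [_ Cx] := Ux.
rewrite aff_unitE s_scale // s_on_U // {1}/hyp_to_aff/diag_act [RHS]hyp_unitE.
by congr (1 + _ ^+ _); rewrite !mulrN opprK mulrACA expfz_scale_cancel // /ftail; field.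
Qed.

Lemma hyp_unit_aff_to_hyp v : aff_unit.@[v] != 0 -> hyp_unit.@[aff_to_hyp v] = aff_unit.@[v].
Proof.
move=> Cv; rewrite hyp_unitE aff_unitE /aff_to_hyp fcons0 fconsS /diag_act exprz_inv -invr_expz.
by congr (1 + _ ^+ _); field; rewrite expfz_neq0.
Qed.

Lemma P_aff_to_hyp v : aff_unit.@[v] != 0 -> P.@[aff_to_hyp v] = 0.
Proof.
move=> Cv; rewrite P_eval_unit hyp_unit_aff_to_hyp // {1}/aff_to_hyp fcons0 ftail_fcons.
rewrite s_scale_inv //.
by rewrite expfzDr // expr1z; ring.
Qed.

Lemma aff_to_hypK v : aff_unit.@[v] != 0 -> hyp_to_aff (aff_to_hyp v) = v.
Proof.
move=> Cv; rewrite /hyp_to_aff hyp_unit_aff_to_hyp // /aff_to_hyp ftail_fcons.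
by rewrite diag_actM mulfV // diag_act1.
Qed.

Lemma hyp_to_affK x : U x -> aff_to_hyp (hyp_to_aff x) = x.
Proof.
move=> Ux; have [_ Cx] := Ux.
rewrite /aff_to_hyp aff_unit_hyp_to_aff // -[RHS]fcons_ftail; congr fcons.
  rewrite /hyp_to_aff s_scale // s_on_U // mulNr mulrA expfz_scale_cancel //.
  by field.
by rewrite /hyp_to_aff diag_actM mulVf // diag_act1.
Qed.

Lemma hyp_to_aff_equivariant l x :
  l != 0 -> hyp_to_aff (diag_act w l x) = diag_act (ftail w) l (hyp_to_aff x).
Proof. by move=> l0; rewrite /hyp_to_aff hyp_unit_invariant // diag_actC. Qed.

Lemma regular_hyp_to_aff : regular_on U hyp_to_aff.
Proof.
apply: (@regular_on_scaled _ _ _ _ hyp_unit (fun i => 'X_(lift ord0 i)) e) => [x [] //|x _ i].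
by rewrite mevalXU mulrC.
Qed.

Lemma regular_aff_to_hyp : regular_on U' aff_to_hyp.
Proof.
apply: (@regular_on_scaled _ _ _ _ aff_unit (fcons (- s) (fun j => 'X_j))
  (fcons (e ord0) (fun j => - e j))) => [v [] //|v _ i].
rewrite /aff_to_hyp /fcons; case: unliftP => [j|] _.
  by rewrite mevalXU /diag_act exprz_inv mulrC.
by rewrite mevalN !mulNr mulrC.
Qed.

Theorem hypersurface_Gm_linearly_rational : Gm_linearly_rational [:: P] w (fun _ => 0).
Proof.
apply: (Gm_linearly_rational_of_principal_iso (v := ftail w) (c' := aff_unit)
  (g := aff_to_hyp) U_origin U_stable U'_stable _
  (fun l x l0 _ => hyp_to_aff_equivariant x l0)).
split; [split|split].
- by move=> x Ux; split; rewrite ?aff_unit_hyp_to_aff //; case: Ux.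
- by move=> v [_ Cv]; split; [apply/Zset1; apply: P_aff_to_hyp | rewrite hyp_unit_aff_to_hyp].
- exact: regular_hyp_to_aff.
- exact: regular_aff_to_hyp.
- exact: hyp_to_affK.
- by move=> v [_ Cv]; apply: aff_to_hypK.
Qed.

End Hypersurface.

Definition j1 : 'I_3 := @Ordinal 3 1 isT.
Definition j2 : 'I_3 := @Ordinal 3 2 isT.

Definition weights3 (a b c : int) : 'I_3 -> int :=
  fun i => match val i with 0 => a | 1 => b | _ => c end.

Lemma coords4 : [/\ i0 = ord0, i1 = lift ord0 ord0, i2 = lift ord0 j1 & i3 = lift ord0 j2].
Proof. by split; apply: val_inj. Qed.

Lemma two_neq0_CC : 2%:R != 0 :> CC.
Proof. by rewrite pnatr_eq0. Qed.

Section X1.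
Variables (a2 a3 k : nat).
Definition s1 : {mpoly CC[3]} := 'X_j1 ^+ a2 + 'X_j2 ^+ a3.

Lemma s1_weight : quasi_homog (ftail (X1_weights a2 a3)) (a2 * a3)%N%:Z s1.
Proof.
pose w := ftail (X1_weights a2 a3).
have hz : quasi_homog w (a3%:Z * a2%:Z) ('X_j1 ^+ a2 : {mpoly CC[3]})
  := quasi_homogXn a2 (quasi_homogX _ j1).
have ht : quasi_homog w (a2%:Z * a3%:Z) ('X_j2 ^+ a3 : {mpoly CC[3]})
  := quasi_homogXn a3 (quasi_homogX _ j2).
by rewrite PoszM; apply: quasi_homogD; rewrite // mulrC.
Qed.

Lemma s1_scale : quasi_homog (weights3 (-1) 0 0) 0 s1.
Proof.
have hz : quasi_homog (weights3 (-1) 0 0) (0 * a2%:Z) ('X_j1 ^+ a2 : {mpoly CC[3]})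
  := quasi_homogXn a2 (quasi_homogX _ j1).
have ht : quasi_homog (weights3 (-1) 0 0) (0 * a3%:Z) ('X_j2 ^+ a3 : {mpoly CC[3]})
  := quasi_homogXn a3 (quasi_homogX _ j2).
by rewrite !mul0r in hz ht; apply: quasi_homogD.
Qed.

Lemma X1_eqE (x : pt CC 4) : (0 < k)%N ->
  (X1_eq a2 a3 k).@[x] =
    x ord0 * (1 + (x ord0 * x (lift ord0 ord0)) ^+ k.-1) + s1.@[ftail x].
Proof.
case: k => // k' _; rewrite /X1_eq /vx /vy /vz /vt; have [-> -> -> ->] := coords4.
rewrite !(mevalD, mevalM, mevalXn, mevalXU) /ftail exprS exprMn; ring.
Qed.

Lemma X1_Gm_linearly_rational : (0 < a2)%N -> (0 < a3)%N -> (0 < k)%N ->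
  Gm_linearly_rational [:: X1_eq a2 a3 k] (X1_weights a2 a3) origin4.
Proof.
move=> a2_gt0 a3_gt0 k_gt0.
apply: (hypersurface_Gm_linearly_rational (k := k.-1) (e := weights3 (-1) 0 0) (s := s1))
  => //.
- exact: two_neq0_CC.
- exact: s1_weight.
- exact: s1_scale.
- by rewrite mevalD !mevalXn !mevalXU !expr0n !eqn0Ngt a2_gt0 a3_gt0 addr0.
- by move=> x; apply: X1_eqE.
Qed.
End X1.

Section X2.
Variables (a2 a3 M : nat).

Definition s2 : {mpoly CC[3]} := 'X_ord0 ^+ M * 'X_j1 ^+ a2 + 'X_j2 ^+ a3.

Lemma s2_weight : quasi_homog (ftail (X2_weights a2 a3 M.+1)) (a2 * a3)%N%:Z s2.
Proof.
pose w := ftail (X2_weights a2 a3 M.+1).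
have hy : quasi_homog w (- (a2 * a3)%N%:Z * M%:Z) ('X_ord0 ^+ M : {mpoly CC[3]})
  := quasi_homogXn M (quasi_homogX _ ord0).
have hz : quasi_homog w ((M.+1 * a3)%N%:Z * a2%:Z) ('X_j1 ^+ a2 : {mpoly CC[3]})
  := quasi_homogXn a2 (quasi_homogX _ j1).
have ht : quasi_homog w (a2%:Z * a3%:Z) ('X_j2 ^+ a3 : {mpoly CC[3]})
  := quasi_homogXn a3 (quasi_homogX _ j2).
apply: quasi_homogD; last by rewrite PoszM.
rewrite (_ : (a2 * a3)%N%:Z = - (a2 * a3)%N%:Z * M%:Z + (M.+1 * a3)%N%:Z * a2%:Z).
  exact: quasi_homogM hy hz.
lia.
Qed.

(* If u (M+1) a3 + v a2 = 1, these solve e_0 (M+1) + e_1 a2 = -1 and e_0 + e_2 a3 = -1. *)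
Definition e2 (u v : int) : 'I_3 -> int :=
  weights3 (M%:Z * u * a3%:Z - 1) (M%:Z * v) (- (M%:Z * u)).

Lemma s2_scale u v : u * (M.+1 * a3)%N%:Z + v * a2%:Z = 1 ->
  quasi_homog (e2 u v) (-1 - e2 u v ord0) s2.
Proof.
move=> uv.
have hy : quasi_homog (e2 u v)
  ((M%:Z * u * a3%:Z - 1) * M%:Z) ('X_ord0 ^+ M : {mpoly CC[3]})
  := quasi_homogXn M (quasi_homogX _ ord0).
have hz : quasi_homog (e2 u v) (M%:Z * v * a2%:Z) ('X_j1 ^+ a2 : {mpoly CC[3]})
  := quasi_homogXn a2 (quasi_homogX _ j1).
have ht : quasi_homog (e2 u v) (- (M%:Z * u) * a3%:Z) ('X_j2 ^+ a3 : {mpoly CC[3]})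
  := quasi_homogXn a3 (quasi_homogX _ j2).
have deg : -1 - e2 u v ord0 = - (M%:Z * u) * a3%:Z.
  by rewrite /e2 /weights3 /=; ring.
apply: quasi_homogD; rewrite deg //.
rewrite (_ : - (M%:Z * u) * a3%:Z = (M%:Z * u * a3%:Z - 1) * M%:Z + M%:Z * v * a2%:Z).
  exact: quasi_homogM hy hz.
rewrite -[M%:Z * v * _]mulrA (_ : v * a2%:Z = 1 - u * (M.+1 * a3)%N%:Z); last first.
  by rewrite -uv addrAC subrr add0r.
by rewrite PoszM intS; ring.
Qed.

Lemma X2_eqE (x : pt CC 4) :
  (X2_eq a2 a3 M.+1).@[x] =
    x ord0 * (1 + (x ord0 * x (lift ord0 ord0)) ^+ M) + s2.@[ftail x].
Proof.
rewrite /X2_eq /vx /vy /vz /vt; have [-> -> -> ->] := coords4.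
by rewrite !(mevalD, mevalM, mevalXn, mevalXU) /ftail exprS exprMn; ring.
Qed.

Lemma X2_Gm_linearly_rational : (0 < a2)%N -> (0 < a3)%N -> coprime (M.+1 * a3) a2 ->
  Gm_linearly_rational [:: X2_eq a2 a3 M.+1] (X2_weights a2 a3 M.+1) origin4.
Proof.
move=> a2_gt0 a3_gt0 cop.
have [u [v uv]] := Bezoutz (M.+1 * a3)%N%:Z a2%:Z.
rewrite /gcdz !absz_nat (eqP cop) in uv.
apply: (hypersurface_Gm_linearly_rational (k := M) (e := e2 u v) (s := s2)) => //.
- exact: two_neq0_CC.
- exact: s2_weight.
- exact: s2_scale.
- by rewrite mevalD !mevalM !mevalXn !mevalXU !expr0n !eqn0Ngt a2_gt0 a3_gt0 mulr0 addr0.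
- exact: X2_eqE.
Qed.

End X2.

Theorem proposition3p5 (a2 a3 k : nat) :
  (0 < a2)%N -> (0 < a3)%N -> (0 < k)%N -> coprime a2 a3 ->
  Gm_linearly_rational [:: X1_eq a2 a3 k] (X1_weights a2 a3) origin4 /\
  (forall d : nat, (2 <= d)%N -> coprime (d * a3) a2 ->
     Gm_linearly_rational [:: X2_eq a2 a3 d] (X2_weights a2 a3 d) origin4).
Proof.
move=> a2_gt0 a3_gt0 k_gt0 _; split; first exact: X1_Gm_linearly_rational.
by case=> // M _ cop; apply: X2_Gm_linearly_rational.
Qed.
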